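(* Let $G$ be the path $P_n$ or the cycle $C_n$ with $n\geq 3$, and let $c_0:V(G)\to\mathbb{Z}$ be any initial chip configuration. Then the sequence of configurations $(c_t)_{t\geq 0}$ produced by the diffusion process is eventually periodic, i.e. there exist integers $t\geq 0$ and $p\geq 1$ with $c_{t+p}=c_t$.
   Context: Diffusion process: for a finite simple graph $G$ and a chip configuration $c_t:V(G)\to\mathbb{Z}$ (negative values allowed), the next configuration is defined simultaneously for every vertex $u$ by $c_{t+1}(u)=c_t(u)-|\{w\in N(u): c_t(u)>c_t(w)\}|+|\{w\in N(u): c_t(u)<c_t(w)\}|$. That is, every vertex sends one chip to each neighbour having strictly fewer chips. *)

From mathcomp Require Import all_boot all_order all_algebra.
Set Implicit Arguments. Unset Strict Implicit. Unset Printing Implicit Defensive.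
Import Order.TTheory GRing.Theory Num.Theory.
Local Open Scope ring_scope.

Definition simple_graph (T : finType) (e : rel T) : Prop :=
  symmetric e /\ irreflexive e.

Definition config (T : finType) := T -> int.

Definition diffuse (T : finType) (e : rel T) (c : config T) : config T :=
  fun u => c u - (#|[set w | e u w & c w < c u]|)%:Z
               + (#|[set w | e u w & c u < c w]|)%:Z.

Definition diffusion_seq (T : finType) (e : rel T) (c0 : config T) (t : nat)
  : config T := iter t (diffuse e) c0.

Definition path_graph (n : nat) : rel 'I_n :=
  fun i j => ((val i).+1 == val j)%N || ((val j).+1 == val i)%N.

Definition cycle_graph (n : nat) : rel 'I_n :=
  fun i j => (((val i).+1 %% n)%N == val j) || (((val j).+1 %% n)%N == val i).

Arguments path_graph n : clear implicits.
Arguments cycle_graph n : clear implicits.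

(* Diffusion on a graph of maximum degree 2 is bounded.  If initially every
   vertex holds at most M chips, then at all later times every vertex holds at
   most M + 1, adjacent vertices hold at most 2M together, and the value M + 1
   occurs only at vertices of degree 2.  Preserving this invariant is a local
   check on an edge uv: the chip exchanged along uv cancels from the sum of the
   two new values, and u and v each have at most one other neighbour, whose
   influence is controlled by the invariant.  Since the process commutes with
   negation, the same argument bounds the configurations from below, so only
   finitely many of them occur and the sequence repeats. *)

From mathcomp Require Import all_boot all_order all_algebra.
From mathcomp Require Import zify ring.
From Stdlib Require Import FunctionalExtensionality.
Set Implicit Arguments. Unset Strict Implicit. Unset Printing Implicit Defensive.
Import Order.TTheory GRing.Theory Num.Theory.
Local Open Scope ring_scope.

Lemma finType_seq_repeats (B : finType) (g : nat -> B) :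
  exists i j, (i < j)%N /\ g i = g j.
Proof.
pose h (i : 'I_#|B|.+1) := g i.
have /injectivePn [i [j ij hij]] : ~~ injectiveb h.
  by apply/injectiveP => /leq_card; rewrite card_ord ltnn.
have [lt|gt] : (i < j \/ j < i)%N by move: ij; rewrite -val_eqE /=; lia.
- by exists i, j.
- by exists j, i.
Qed.

Lemma config_ub (T : finType) (c : config T) : exists M, forall u, c u <= M.
Proof.
exists (\sum_w `|c w|) => u; rewrite (bigD1 u) //=.
by apply: le_trans (ler_norm _) _; rewrite lerDl sumr_ge0.
Qed.

Lemma iter_bounded_eventually_periodic (T : finType) (f : config T -> config T)
    (c0 : config T) (L U : int) :
  (forall t u, L <= iter t f c0 u <= U) ->
  exists t p, (1 <= p)%N /\ iter (t + p) f c0 = iter t f c0.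
Proof.
move=> bnd.
pose code t : {ffun T -> 'I_(absz (U - L)).+1} :=
  [ffun u => inord (absz (iter t f c0 u - L))].
have [i [j [ij /ffunP eq_code]]] := finType_seq_repeats code.
exists i, (j - i)%N; split; first lia.
rewrite subnKC; last lia.
apply: functional_extensionality => u.
have := congr1 val (eq_code u); rewrite !ffunE /= !inordK.
- by have := bnd i u; have := bnd j u; lia.
- by have := bnd j u; lia.
- by have := bnd i u; lia.
Qed.

Section Diffusion.
Variables (T : finType) (e : rel T).

Definition nb_count (u : T) (P : pred T) : nat := #|[set w | e u w & P w]|.

Definition degree (u : T) : nat := nb_count u predT.

Lemma eq_nb_count u P Q : P =1 Q -> nb_count u P = nb_count u Q.
Proof. by move=> PQ; apply: eq_card => w; rewrite !inE PQ. Qed.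

Lemma nb_countD1 u v P : e u v -> nb_count u P = (P v + nb_count u (predD1 P v))%N.
Proof.
move=> euv; rewrite /nb_count (cardsD1 v) inE euv /=; congr (_ + _)%N.
by apply: eq_card => w; rewrite !inE; case: (w == v); rewrite ?andbF.
Qed.

Lemma nb_count_disjointU_le u (P Q R : pred T) :
  (forall w, P w -> ~~ Q w) -> (forall w, P w || Q w -> R w) ->
  (nb_count u P + nb_count u Q <= nb_count u R)%N.
Proof.
move=> PQ PQR; rewrite /nb_count -cardsUI.
have -> : [set w | e u w & P w] :&: [set w | e u w & Q w] = set0.
  by apply/setP => w; rewrite !inE; case Pw: (P w); rewrite ?(negbTE (PQ _ Pw)) !andbF.
rewrite cards0 addn0; apply: subset_leq_card; apply/subsetP => w.
by rewrite !inE -andb_orr => /andP [-> /PQR].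
Qed.

Lemma nb_count_gt0P u (P : pred T) : reflect (exists2 w, e u w & P w) (0 < nb_count u P)%N.
Proof.
rewrite card_gt0; apply: (iffP (set0Pn _)) => [[w]|[w euw Pw]].
  by rewrite inE => /andP [euw Pw]; exists w.
by exists w; rewrite inE euw.
Qed.

Lemma nb_count_eq0 u P : (forall w, e u w -> ~~ P w) -> nb_count u P = 0%N.
Proof.
move=> nP; apply/eqP; rewrite cards_eq0; apply/eqP/setP => w; rewrite !inE.
by case euw: (e u w); rewrite // (negbTE (nP _ euw)).
Qed.

Lemma nb_count_le_degree u P : (nb_count u P <= degree u)%N.
Proof. by apply: subset_leq_card; apply/subsetP => w; rewrite !inE => /andP [->]. Qed.


Definition richer (c : config T) u : pred T := fun w => c u < c w.
Definition poorer (c : config T) u : pred T := fun w => c w < c u.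

Definition gain (c : config T) u := nb_count u (richer c u).
Definition loss (c : config T) u := nb_count u (poorer c u).

Definition net_off (c : config T) u v : int :=
  (nb_count u (predD1 (richer c u) v))%:Z - (nb_count u (predD1 (poorer c u) v))%:Z.

Lemma diffuseE c u : diffuse e c u = c u - (loss c u)%:Z + (gain c u)%:Z.
Proof. by []. Qed.

Lemma diffuse_opp c u : diffuse e (fun w => - c w) u = - diffuse e c u.
Proof.
rewrite !diffuseE /gain /loss.
rewrite (@eq_nb_count u (richer _ u) (poorer c u)) => [|w]; last exact: ltrN2.
rewrite (@eq_nb_count u (poorer _ u) (richer c u)) => [|w]; last exact: ltrN2.
ring.
Qed.

Lemma diffusion_seq_opp c0 t :
  diffusion_seq e (fun w => - c0 w) t = (fun w => - diffusion_seq e c0 t w).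
Proof.
elim: t => [|t IH] //=; apply: functional_extensionality => u.
by rewrite /diffusion_seq /= -/(diffusion_seq _ _ t) IH diffuse_opp.
Qed.

Hypothesis e_sym : symmetric e.

(* The chip exchanged along the edge uv itself cancels out of the sum. *)
Lemma diffuse_edge_sum c u v : e u v ->
  diffuse e c u + diffuse e c v = c u + c v + net_off c u v + net_off c v u.
Proof.
move=> euv; have evu : e v u by rewrite e_sym.
rewrite !diffuseE /gain /loss /net_off.
rewrite (nb_countD1 (richer c u) euv) (nb_countD1 (poorer c u) euv).
rewrite (nb_countD1 (richer c v) evu) (nb_countD1 (poorer c v) evu) /richer /poorer.
by case: (c u < c v); case: (c v < c u); lia.
Qed.

Hypothesis degree_le2 : forall u, (degree u <= 2)%N.

Lemma net_off_bounds c u v : e u v -> -1 <= net_off c u v <= 1.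
Proof.
move=> euv.
have : (nb_count u (predD1 (richer c u) v) + nb_count u (predD1 (poorer c u) v) <= 1)%N.
  apply: leq_trans (_ : _ <= nb_count u (predD1 predT v))%N _.
    apply: nb_count_disjointU_le => w /=.
    - by case/andP => _ lt; rewrite negb_and /poorer -leNgt (ltW lt) orbT.
    - by case/orP => /andP [->].
  by have := degree_le2 u; rewrite /degree (nb_countD1 _ euv).
rewrite /net_off; lia.
Qed.

Definition capped (M : int) (c : config T) :=
  [/\ forall u, c u <= M + 1,
      forall u v, e u v -> c u + c v <= 2 * M
    & forall u, c u = M + 1 -> (2 <= degree u)%N].

Lemma capped_le M c : (forall u, c u <= M) -> capped M c.
Proof.
move=> le_cM; split=> [u|u v _|u].
- by have := le_cM u; lia.
- by have := le_cM u; have := le_cM v; lia.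
- by have := le_cM u; lia.
Qed.

Lemma capped_no_richer M c u w : capped M c -> M <= c u -> e u w -> ~~ richer c u w.
Proof. by case=> _ sum_le _ le_Mu euw; have := sum_le u w euw; rewrite /richer; lia. Qed.

Lemma capped_net_off_gt0 M c u v : capped M c -> 0 < net_off c u v -> c u < M.
Proof.
case=> _ sum_le _; rewrite /net_off => pos.
have /nb_count_gt0P [w euw /andP [_ lt]] : (0 < nb_count u (predD1 (richer c u) v))%N.
  by lia.
by have := sum_le u w euw; rewrite /richer in lt; lia.
Qed.

Lemma capped_net_off_top M c u v :
  capped M c -> e u v -> c u = M + 1 -> net_off c u v < 0.
Proof.
move=> capc euv top; have [_ sum_le deg2] := capc.
have /nb_count_gt0P [b eub /andP [bv _]] : (0 < nb_count u (predD1 predT v))%N.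
  by have := deg2 u top; rewrite /degree (nb_countD1 _ euv).
have poor_b : (0 < nb_count u (predD1 (poorer c u) v))%N.
  by apply/nb_count_gt0P; exists b; rewrite //= bv /poorer; have := sum_le u b eub; lia.
rewrite /net_off nb_count_eq0 => [|w euw]; first lia.
by rewrite negb_and (capped_no_richer capc _ euw) ?orbT //; lia.
Qed.

Lemma capped_diffuse_vertex M c u : capped M c ->
  diffuse e c u <= M + 1 /\ (diffuse e c u = M + 1 -> (2 <= degree u)%N).
Proof.
move=> capc; have [le_c _ deg2] := capc.
rewrite diffuseE; have : (gain c u <= degree u)%N := nb_count_le_degree u _.
have := degree_le2 u; have := le_c u; have := deg2 u.
have [le_Mu|lt_uM] := lerP M (c u); last by lia.
by rewrite /gain nb_count_eq0 => [|w]; [lia | exact: capped_no_richer capc le_Mu].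
Qed.

Lemma capped_diffuse M c : capped M c -> capped M (diffuse e c).
Proof.
move=> capc; split=> [u|u v euv|u].
- by case: (capped_diffuse_vertex u capc).
- have evu : e v u by rewrite e_sym.
  have [le_c sum_le _] := capc.
  have := le_c u; have := le_c v; have := sum_le u v euv.
  have := net_off_bounds c euv; have := net_off_bounds c evu.
  have := @capped_net_off_gt0 M c u v capc; have := @capped_net_off_gt0 M c v u capc.
  have := capped_net_off_top capc euv; have := capped_net_off_top capc evu.
  rewrite diffuse_edge_sum //; lia.
- by case: (capped_diffuse_vertex u capc).
Qed.

Lemma diffusion_seq_capped M c0 t : capped M c0 -> capped M (diffusion_seq e c0 t).
Proof. by move=> capc0; elim: t => //= t; apply: capped_diffuse. Qed.

Lemma diffusion_seq_bounded c0 :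
  exists L U, forall t u, L <= diffusion_seq e c0 t u <= U.
Proof.
have [M le_c0M] := config_ub c0; have [M' le_oppc0M'] := config_ub (fun w => - c0 w).
exists (- (M' + 1)), (M + 1) => t u.
have [le_ct _ _] := diffusion_seq_capped t (capped_le le_c0M).
have [le_oppct _ _] := diffusion_seq_capped t (capped_le le_oppc0M').
have := le_ct u; have := le_oppct u; rewrite diffusion_seq_opp; lia.
Qed.

Lemma diffusion_eventually_periodic c0 :
  exists t p, (1 <= p)%N /\ diffusion_seq e c0 (t + p) = diffusion_seq e c0 t.
Proof.
have [L [U bnd]] := diffusion_seq_bounded c0.
exact: iter_bounded_eventually_periodic bnd.
Qed.

End Diffusion.

Lemma ord_degree_le2 n (e : rel 'I_n) (f g : 'I_n -> nat) :
  (forall u w, e u w -> val w = f u \/ val w = g u) -> forall u, (degree e u <= 2)%N.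
Proof.
move=> nbr u; rewrite /degree /nb_count cardE -(size_map val).
apply: (@uniq_leq_size _ _ [:: f u; g u]).
  by rewrite (map_inj_uniq val_inj) enum_uniq.
move=> x /mapP [w]; rewrite mem_enum inE andbT => /nbr [] -> ->.
  by rewrite mem_head.
by rewrite !inE eqxx orbT.
Qed.

Lemma path_graph_sym n : symmetric (path_graph n).
Proof. by move=> i j; rewrite /path_graph orbC. Qed.

Lemma path_graph_degree_le2 n u : (degree (path_graph n) u <= 2)%N.
Proof.
apply: (@ord_degree_le2 _ _ (fun u => (val u).+1) (fun u => (val u).-1)) => {}u w.
by case/orP => /eqP; lia.
Qed.

Lemma cycle_graph_sym n : symmetric (cycle_graph n).
Proof. by move=> i j; rewrite /cycle_graph orbC. Qed.

Lemma modn_succ_pred n w : (w < n)%N -> w = ((w.+1 %% n + n.-1) %% n)%N.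
Proof.
move=> lt_wn; have [lt_Swn|eq_Swn] : (w.+1 < n \/ w.+1 = n)%N by lia.
  rewrite (modn_small lt_Swn).
  have -> : (w.+1 + n.-1 = w + n)%N by lia.
  by rewrite modnDr modn_small.
by rewrite eq_Swn modnn add0n modn_small; lia.
Qed.

Lemma cycle_graph_degree_le2 n u : (degree (cycle_graph n) u <= 2)%N.
Proof.
apply: (@ord_degree_le2 _ _ (fun u => ((val u).+1 %% n)%N)
                            (fun u => ((val u + n.-1) %% n)%N)) => {}u w.
case/orP => /eqP <-; first by left.
by right; apply: modn_succ_pred; apply: ltn_ord.
Qed.

Theorem theorem7 (n : nat) (e : rel 'I_n) :
  (3 <= n)%N ->
  (e = path_graph n \/ e = cycle_graph n) ->
  forall c0 : 'I_n -> int,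
    exists (t p : nat), (1 <= p)%N /\
      diffusion_seq e c0 (t + p) = diffusion_seq e c0 t.
Proof.
move=> _ [->|->] c0; apply: diffusion_eventually_periodic.
- exact: path_graph_sym.
- exact: path_graph_degree_le2.
- exact: cycle_graph_sym.
- exact: cycle_graph_degree_le2.
Qed.
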